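(* Let $m\geqslant 1$ and $n\geqslant 0$ be integers. Consider the $n$-dimensional corner preference parking problem with $L=2m$ and $\ell=m$, and let $Y_n$ be the number of cars parked after the first car at the time of saturation (with $Y_0=0$). Then for every $n\geqslant 1$, \[ \mathbb{E}(u^{Y_n}) = u \sum_{1\leqslant k\leqslant n} \binom{n}{k}\frac{m^k-(m-1)^k}{(m+1)^n-m^n}\, \mathbb{E}\bigl(u^{Y_{n-k}}\bigr). \]
   Context: Corner preference parking problem: cars are integral translates of the cube $[0,m]^n$ inside $[0,2m]^n$, each represented by its corner closest to the origin, i.e. by a point of $Z_m^n:=\{\mathbf{a}=(a_1,\dots,a_n): a_j\in\{0,1,\dots,m\}\}$. Let $\rho(\mathbf{x},\mathbf{y}):=\max_{1\leqslant j\leqslant n}|x_j-y_j|$. For $\mathbf{a}\in Z_m^n$ let $S(\mathbf{a}):=\{\mathbf{x}\in Z_m^n: 0\leqslant x_j\leqslant a_j,\ j=1,\dots,n\}$, $U(\mathbf{a},m):=\{\mathbf{x}\in Z_m^n:\rho(\mathbf{x},\mathbf{a})<m\}$ and $S_U(\mathbf{a},m):=S(\mathbf{a})\setminus U(\mathbf{a},m)$. The first car is parked at $\mathbf{a}(1)=(m,\dots,m)$. Given the most recently parked car $\mathbf{a}(k)$, the next car $\mathbf{a}(k+1)$ is chosen uniformly at random among the points of $S_U(\mathbf{a}(k),m)$ (so each new car is coordinatewise no larger than the previous one and does not overlap the previously parked cars); the process stops (saturation) when no such position exists. All possible parking positions are equally likely at each stage. *)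

From mathcomp Require Import all_boot all_order all_algebra.
Set Implicit Arguments. Unset Strict Implicit. Unset Printing Implicit Defensive.
Import Order.TTheory GRing.Theory Num.Theory.

Definition pt (m n : nat) := {ffun 'I_n -> 'I_m.+1}.

Definition rho (m n : nat) (x y : pt m n) : nat :=
  \max_(j < n) maxn (x j - y j) (y j - x j).

Definition Sbox (m n : nat) (a : pt m n) : {set pt m n} :=
  [set x : pt m n | [forall j, (x j <= a j)%N]].

Definition Uball (m n : nat) (a : pt m n) : {set pt m n} :=
  [set x : pt m n | (rho x a < m)%N].

(* S_U(a,m) = S(a) \ U(a,m): the admissible positions for the next car. *)
Definition SU (m n : nat) (a : pt m n) : {set pt m n} := Sbox a :\: Uball a.

Definition first_car (m n : nat) : pt m n := [ffun => ord_max].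

(* pgf_from fuel a = E(u^{number of cars parked after a}) when the most recently
   parked car is at a: if S_U(a) is empty the process stops (contributing u^0 = 1);
   otherwise the next car is uniform on S_U(a), contributing a factor u.
   The fuel only guarantees termination; it is never exhausted when
   fuel > sum of coordinates of a, since each step strictly decreases that sum. *)
Fixpoint pgf_from (R : fieldType) (m n : nat) (u : R) (fuel : nat) (a : pt m n) : R :=
  match fuel with
  | 0 => 1%R
  | f.+1 =>
      if #|SU a| == 0%N then 1%R
      else ((#|SU a|%:R)^-1 * \sum_(b in SU a) u * pgf_from u f b)%R
  end.

Definition EY (R : fieldType) (m n : nat) (u : R) : R :=
  pgf_from u (n * m).+1 (first_car m n).

From mathcomp Require Import all_boot all_order all_algebra.
From mathcomp Require Import ring.
Import Order.TTheory GRing.Theory Num.Theory.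
Set Implicit Arguments. Unset Strict Implicit. Unset Printing Implicit Defensive.
Local Open Scope ring_scope.

(* The generating function of the number of cars still to come only depends on
   the number f of coordinates of the last car a that equal m.  A position
   b <= a is admissible exactly when b_j = 0 for some j with a_j = m.  Summing
   X^(number of coordinates of b equal to m) over the admissible b factors
   coordinatewise and gives ((m + X)^f - (m - 1 + X)^f) * c, where c counts the
   choices on the other coordinates; so c * C(f, k) * (m^k - (m-1)^k) positions
   keep f - k coordinates at m, out of c * ((m + 1)^f - m^f) positions in all. *)

Lemma sum_ffun_prod (R : comNzRingType) (I J : finType) (P : I -> pred J)
    (w : I -> J -> R) :
  \sum_(b : {ffun I -> J} | [forall i, P i (b i)]) \prod_i w i (b i) =
  \prod_i \sum_(x | P i x) w i x.
Proof.
rewrite bigA_distr_big_dep; apply: eq_bigl => b.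
by apply/forallP/familyP.
Qed.

Lemma coef_CaddX_exp (R : comNzRingType) (c : R) f i :
  ((c%:P + 'X) ^+ f)`_i = c ^+ (f - i) *+ 'C(f, i).
Proof.
rewrite exprDn coef_sum.
under eq_bigr => j _ do rewrite coefMn -rmorphXn coefCM coefXn.
have [le_if|lt_fi] := leqP i f; last first.
  rewrite bin_small // big1 // => j _.
  by rewrite (gtn_eqF (leq_trans (ltn_ord j) lt_fi)) mulr0 mul0rn.
rewrite (bigD1 (Ordinal (le_if : i < f.+1)%N)) //= eqxx mulr1 big1 ?addr0 // => j.
by rewrite eq_sym -val_eqE /= => /negbTE ->; rewrite mulr0 mul0rn.
Qed.

Lemma sum_comp_genpoly (R : comNzRingType) (I : finType) (A : pred I)
    (F : I -> nat) (h : nat -> R) N :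
  (forall b, A b -> F b < N)%N ->
  \sum_(b in A) h (F b) = \sum_(i < N) (\sum_(b in A) 'X^(F b))`_i * h i.
Proof.
move=> ltFN.
under [RHS]eq_bigr do rewrite coef_sum mulr_suml.
rewrite exchange_big; apply: eq_bigr => b Ab.
rewrite (bigD1 (Ordinal (ltFN b Ab))) //= coefXn eqxx mul1r big1 ?addr0 // => i.
by rewrite coefXn -val_eqE /= => /negbTE ->; rewrite mul0r.
Qed.

Lemma sum_interval_weight (R : nzRingType) m (lo a : nat) : (lo <= a <= m)%N ->
  \sum_(x < m.+1 | (lo <= x <= a)%N) 'X^(x == m :> nat) =
  (a - lo)%:R + 'X^(a == m) :> {poly R}.
Proof.
case/andP=> le_lo_a le_am.
transitivity (\sum_(lo <= x < a.+1) 'X^(x == m) : {poly R}).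
  rewrite (big_nat_widen _ _ m.+1) // big_geq_mkord.
  by apply: eq_bigl => x; rewrite ltnS andbC.
rewrite big_nat_recr //= (eq_big_nat _ _ (F2 := fun=> 1)); last first.
  by move=> x /andP[_ lt_xa]; rewrite ltn_eqF ?expr0 // (leq_trans lt_xa).
by rewrite sumr_const_nat.
Qed.

Definition ntop m n (b : pt m n) : nat := #|[pred j | b j == m :> nat]|.

Definition nontop_vol m n (a : pt m n) : nat := \prod_(j | a j != m :> nat) (a j).+1.

(* The positions below [a] that stay >= d on the coordinates where [a] equals m:
   [d = 0] gives S(a) and [d = 1] gives the intersection of S(a) and U(a, m). *)
Definition box_below m n (a : pt m n) (d : nat) : pred (pt m n) :=
  [pred b : pt m n | [forall j, (if a j == m :> nat then d else 0) <= b j <= a j]%N].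

Lemma prod_weight_ntop (R : comNzRingType) m n (b : pt m n) :
  \prod_j 'X^(b j == m :> nat) = 'X^(ntop b) :> {poly R}.
Proof. by rewrite prodrXr -big_mkcond sum1_card. Qed.

Lemma sum_box_below (R : comNzRingType) m n (a : pt m n) d : (d <= m)%N ->
  \sum_(b in box_below a d) 'X^(ntop b) =
  ((m - d)%:R + 'X) ^+ ntop a * (nontop_vol a)%:R :> {poly R}.
Proof.
move=> le_dm; pose lo j := if a j == m :> nat then d else 0%N.
pose P j (x : 'I_m.+1) := (lo j <= x <= a j)%N.
under eq_bigr do rewrite -prod_weight_ntop.
rewrite (eq_bigl (fun b : pt m n => [forall j, P j (b j)])) //.
rewrite [LHS](sum_ffun_prod P (fun _ x => 'X^(x == m :> nat))).
rewrite (eq_bigr (fun j => (a j - lo j)%:R + 'X^(a j == m :> nat))); last first.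
  move=> j _; apply: sum_interval_weight.
  by rewrite /lo leq_ord andbT; case: eqP => // ->.
rewrite [LHS](bigID (fun j => a j == m :> nat)) /= natr_prod; congr (_ * _).
  by rewrite -prodr_const; apply: eq_bigr => j top_j; rewrite /lo top_j (eqP top_j).
by apply: eq_bigr => j /negbTE top_j; rewrite /lo top_j subn0 expr0 natr1.
Qed.

Lemma mem_SU m n (a b : pt m n) : (0 < m)%N ->
  (b \in SU a) = (b \in box_below a 0) && (b \notin box_below a 1).
Proof.
move=> m_gt0; rewrite !inE /=.
have -> : [forall j, (if a j == m :> nat then 0 else 0) <= b j <= a j]%N =
          [forall j, b j <= a j]%N by apply: eq_forallb => j; case: ifP.
rewrite andbC; case: (boolP [forall j, _]) => //= /forallP le_ba; congr (~~ _).
have dist_sub j : maxn (b j - a j) (a j - b j) = (a j - b j)%N.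
  by rewrite (eqP (le_ba j)) max0n.
rewrite /rho -[m in (_ < m)%N](prednK m_gt0) ltnS.
under eq_bigr do rewrite dist_sub.
have -> : [forall j, (if a j == m :> nat then 1 else 0) <= b j <= a j]%N =
          [forall j, a j - b j <= m.-1]%N.
  apply: eq_forallb => j; rewrite le_ba andbT -[(_ <= m.-1)%N]ltnS prednK //.
  case: eqP => [->|/eqP top_j]; first by rewrite ltn_subrL m_gt0 andbT.
  by rewrite (leq_ltn_trans (leq_subr _ _)) // ltn_neqAle top_j leq_ord.
by apply/bigmax_leqP/forallP => /= lt_ab j //; apply: lt_ab.
Qed.

Lemma sum_SU_genX (R : comNzRingType) m n (a : pt m n) : (0 < m)%N ->
  \sum_(b in SU a) 'X^(ntop b) =
  ((m%:R + 'X) ^+ ntop a - ((m - 1)%:R + 'X) ^+ ntop a) * (nontop_vol a)%:R :> {poly R}.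
Proof.
move=> m_gt0; rewrite mulrBl -sum_box_below //.
have := sum_box_below R a (leq0n m); rewrite subn0 => <-.
rewrite [in RHS](bigID (mem (box_below a 1))) /=.
rewrite [X in X + _ - _](eq_bigl (mem (box_below a 1))) => [|b].
  by rewrite addrAC subrr add0r; apply: eq_bigl => b; rewrite mem_SU.
rewrite andb_idl // => /forallP box1_b; apply/forallP => j.
by case/andP: (box1_b j) => _ ->; case: ifP.
Qed.

Lemma ntop_SU_le m n (a b : pt m n) : b \in SU a -> (ntop b <= ntop a)%N.
Proof.
rewrite inE => /andP[_]; rewrite inE => /forallP le_ba.
apply: subset_leq_card; apply/subsetP => j; rewrite !inE => /eqP top_bj.
by rewrite eqn_leq leq_ord -[X in (X <= _)%N]top_bj le_ba.
Qed.

Lemma sum_SU_ntop (R : comNzRingType) m n (a : pt m n) (h : nat -> R) : (0 < m)%N ->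
  \sum_(b in SU a) h (ntop b) =
  (nontop_vol a)%:R * \sum_(1 <= k < (ntop a).+1)
    'C(ntop a, k)%:R * (m%:R ^+ k - (m%:R - 1) ^+ k) * h (ntop a - k)%N.
Proof.
move=> m_gt0; set f := ntop a.
rewrite (@sum_comp_genpoly _ _ _ _ _ f.+1) => [|b /ntop_SU_le]; last by rewrite ltnS.
rewrite sum_SU_genX // -!polyC_natr natrB // -/f.
under eq_bigr do rewrite coefMC coefB !coef_CaddX_exp.
rewrite (reindex_inj rev_ord_inj) big_ord_recl /= subn1 subnn !expr0 subrr.
rewrite !mul0r add0r big_add1 /= big_mkord mulr_sumr.
apply: eq_bigr => k _; have -> : bump 0 k = k.+1 by [].
rewrite subSS (subKn (ltn_ord k)) (bin_sub (ltn_ord k)) -mulrnBl -mulr_natl.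
ring.
Qed.

Lemma card_SU (R : comNzRingType) m n (a : pt m n) : (0 < m)%N ->
  #|SU a|%:R = (nontop_vol a)%:R * ((m%:R + 1) ^+ ntop a - m%:R ^+ ntop a) :> R.
Proof.
move=> m_gt0; have := congr1 (horner^~ 1) (sum_SU_genX R a m_gt0).
rewrite horner_sum; under eq_bigr do rewrite hornerXn expr1n.
rewrite sumr_const => ->; rewrite !hornerE -!polyC_natr !hornerC.
by rewrite natrB // subrK mulrC.
Qed.

Fixpoint pgf_top (R : fieldType) (m : nat) (u : R) (fuel f : nat) : R :=
  match fuel with
  | 0 => 1
  | g.+1 =>
      if f == 0%N then 1 else
      u * \sum_(1 <= k < f.+1) 'C(f, k)%:R
            * ((m%:R ^+ k - (m%:R - 1) ^+ k) / ((m%:R + 1) ^+ f - m%:R ^+ f))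
            * pgf_top m u g (f - k)
  end.

Lemma pgf_topS (R : fieldType) m (u : R) g f : pgf_top m u g.+1 f =
  if f == 0%N then 1 else
  u * \sum_(1 <= k < f.+1) 'C(f, k)%:R
        * ((m%:R ^+ k - (m%:R - 1) ^+ k) / ((m%:R + 1) ^+ f - m%:R ^+ f))
        * pgf_top m u g (f - k).
Proof. by []. Qed.

Lemma pgf_top_fuel (R : fieldType) m (u : R) g f :
  (f < g)%N -> pgf_top m u g f = pgf_top m u f.+1 f.
Proof.
elim: f {-2}f (leqnn f) g => [|N IHN] f le_fN [|g] // lt_fg.
  by move: le_fN; rewrite leqn0 => /eqP ->.
rewrite !pgf_topS; case: eqP => // /eqP f_neq0.
congr (_ * _); apply: eq_big_nat => k /andP[k_gt0 _]; congr (_ * _).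
have lt_fk_f : (f - k < f)%N by rewrite ltn_subrL k_gt0 lt0n.
have le_fk_N : (f - k <= N)%N by rewrite -ltnS (leq_trans lt_fk_f).
by rewrite (IHN _ le_fk_N) ?(IHN _ le_fk_N f) // (leq_trans lt_fk_f).
Qed.

Lemma pgf_from_top (R : numFieldType) m n (u : R) g (a : pt m n) : (0 < m)%N ->
  pgf_from u g a = pgf_top m u g (ntop a).
Proof.
move=> m_gt0; elim: g a => [//|g IHg] a; rewrite pgf_topS /=.
have cardE := card_SU R a m_gt0.
have c_neq0 : (nontop_vol a)%:R != 0 :> R by rewrite pnatr_eq0 -lt0n prodn_gt0.
have [top0|top_gt0] := posnP (ntop a).
  suff /eqP -> : #|SU a| == 0%N by [].
  by rewrite -(pnatr_eq0 R) cardE top0 !expr0 subrr mulr0.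
have D_gt0 : 0 < (m%:R + 1) ^+ ntop a - m%:R ^+ ntop a :> R.
  by rewrite subr_gt0 ltrXn2r ?ler0n ?ltrDl ?ltr01 // -lt0n.
have SU_neq0 : #|SU a| != 0%N.
  by rewrite -(pnatr_eq0 R) cardE mulf_neq0 // gt_eqF.
rewrite (negbTE SU_neq0) cardE.
under eq_bigr do rewrite IHg.
rewrite (sum_SU_ntop a (fun i => u * pgf_top m u g i)) // !mulr_sumr.
apply: eq_bigr => k _; field.
by rewrite c_neq0 gt_eqF.
Qed.

Lemma EY_top (R : numFieldType) m n (u : R) :
  (0 < m)%N -> EY m n u = pgf_top m u n.+1 n.
Proof.
move=> m_gt0; have ntop_first : ntop (first_car m n) = n.
  by rewrite -[RHS]card_ord; apply: eq_card => j; rewrite !inE ffunE eqxx.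
by rewrite /EY pgf_from_top // ntop_first pgf_top_fuel // ltnS leq_pmulr.
Qed.

Theorem mainTheorem1 (R : realFieldType) (m n : nat) (u : R) :
  (1 <= m)%N -> (1 <= n)%N ->
  EY m n u =
  u * \sum_(1 <= k < n.+1)
        'C(n, k)%:R
        * ((m%:R ^+ k - (m%:R - 1) ^+ k) / ((m%:R + 1) ^+ n - m%:R ^+ n))
        * EY m (n - k) u.
Proof.
move=> m_gt0 n_gt0; rewrite EY_top // pgf_topS gtn_eqF //.
congr (_ * _); apply: eq_big_nat => k /andP[k_gt0 _].
by rewrite EY_top // pgf_top_fuel // ltn_subrL k_gt0.
Qed.
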